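(* Let $\mathcal F_1$ be a finite set of partial patterns. Then there exists a finite set $\mathcal F_2$ of permutation patterns (permutation matrices) such that $C_n(\mathcal F_1)=C_n(\mathcal F_2)$ for all $n\in\mathbb N$.
   Context: A partial pattern is a $0$-$1$ matrix (not necessarily square) in which every row and every column contains at most one $1$; every permutation matrix is a partial pattern. An $n\times n$ permutation matrix $M$ contains a partial pattern $L$ if $L$ can be obtained from $M$ by deleting some rows and columns, and avoids $L$ otherwise. For a set $\mathcal F$ of partial patterns, $C_n(\mathcal F)$ is the number of $n\times n$ permutation matrices avoiding every partial pattern in $\mathcal F$. (For permutation matrices, this coincides with the usual notion of permutation pattern containment.) *)

From mathcomp Require Import all_boot all_order all_algebra all_fingroup.
Set Implicit Arguments. Unset Strict Implicit. Unset Printing Implicit Defensive.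

Record ppat := PPat { pr : nat; pc : nat; pm : 'M[bool]_(pr, pc) }.

Definition is_partial (L : ppat) : bool :=
  [forall i : 'I_(pr L), #|[pred j : 'I_(pc L) | pm L i j]| <= 1] &&
  [forall j : 'I_(pc L), #|[pred i : 'I_(pr L) | pm L i j]| <= 1].

Definition perm_pat (k : nat) (s : {perm 'I_k}) : ppat :=
  @PPat k k (\matrix_(i < k, j < k) (s i == j)).

Definition incr (k n : nat) (f : {ffun 'I_k -> 'I_n}) : bool :=
  [forall i : 'I_k, forall j : 'I_k, (i < j) ==> (f i < f j)].

(* The n x n permutation matrix of s contains L: L is obtained by deleting
   some rows and columns, i.e. by keeping rows r(0)<..<r(k-1) and columns
   c(0)<..<c(l-1). *)
Definition contains (n : nat) (s : {perm 'I_n}) (L : ppat) : bool :=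
  [exists r : {ffun 'I_(pr L) -> 'I_n}, exists c : {ffun 'I_(pc L) -> 'I_n},
    [&& incr r, incr c &
        [forall i : 'I_(pr L), forall j : 'I_(pc L),
           pm L i j == (s (r i) == c j)]]].

Definition Cn (n : nat) (F : seq ppat) : nat :=
  #|[pred s : {perm 'I_n} | all (fun L => ~~ contains s L) F]|.

From mathcomp Require Import all_boot all_order all_algebra all_fingroup.
Set Implicit Arguments. Unset Strict Implicit. Unset Printing Implicit Defensive.
Import Order.TTheory.

(* If a permutation s contains a pattern L, keep the rows of s used by the
   occurrence together with the rows of s hitting its columns: at most
   [pr L + pc L] rows, which in s form a permutation pattern p containing L.
   Hence, by transitivity of containment, s avoids F1 iff it avoids the finitely
   many permutations of size at most max (pr L + pc L) that contain some L in
   F1. *)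

(* Unlike [enum_val], [Order.enum_val] enumerates in increasing order. *)
Lemma lt_enum_val_ord n (A : {pred 'I_n}) :
  {mono @Order.enum_val _ _ A : i j / i < j}.
Proof.
move=> i j; have := leW_mono (Order.le_enum_val (@le_total _ 'I_n) (A:=A)) i j.
by rewrite !ltEord.
Qed.

Lemma incrP k n (f : {ffun 'I_k -> 'I_n}) :
  reflect (forall i j : 'I_k, i < j -> f i < f j) (incr f).
Proof.
apply: (iffP forallP) => [f_incr i j|f_incr i].
  by move/forallP/(_ j)/implyP: (f_incr i).
by apply/forallP => j; apply/implyP/f_incr.
Qed.

Lemma containsP n (s : {perm 'I_n}) L :
  reflect (exists r c, [/\ incr r, incr c & forall i j, pm L i j = (s (r i) == c j)])
    (contains s L).
Proof.
apply: (iffP existsP) => [[r /existsP [c /and3P [r_incr c_incr /forallP occ]]]|].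
  by exists r, c; split=> // i j; apply/eqP/(forallP (occ i)).
move=> [r [c [r_incr c_incr occ]]]; exists r; apply/existsP; exists c.
by rewrite r_incr c_incr; apply/forallP => i; apply/forallP => j; rewrite occ.
Qed.

Lemma incr_comp a b c (f : {ffun 'I_b -> 'I_c}) (g : {ffun 'I_a -> 'I_b}) :
  incr f -> incr g -> incr [ffun i => f (g i)].
Proof.
by move=> /incrP f_incr /incrP g_incr; apply/incrP => i j /g_incr/f_incr; rewrite !ffunE.
Qed.

Lemma incr_enum_factor k n (A : {pred 'I_n}) (f : {ffun 'I_k -> 'I_n}) :
  (forall i, f i \in A) -> incr f ->
  exists2 g : {ffun 'I_k -> 'I_#|A|}, incr g & forall i, Order.enum_val (g i) = f i.
Proof.
move=> fA /incrP f_incr; exists [ffun i => Order.enum_rank_in (fA i) (f i)].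
  apply/incrP => i j; rewrite !ffunE -lt_enum_val_ord !Order.enum_rankK_in //.
  exact: f_incr.
by move=> i; rewrite ffunE Order.enum_rankK_in.
Qed.

Lemma contains_trans n (s : {perm 'I_n}) k (p : {perm 'I_k}) L :
  contains s (perm_pat p) -> contains p L -> contains s L.
Proof.
move=> /containsP [r [c [r_incr c_incr occ]]] /containsP [r' [c' [r'_incr c'_incr occ']]].
apply/containsP; exists [ffun i => r (r' i)], [ffun j => c (c' j)].
by split; rewrite ?incr_comp // => i j; rewrite !ffunE occ' -occ mxE.
Qed.

Section RestrictPerm.

Variables (n : nat) (s : {perm 'I_n}) (S : {set 'I_n}).

Lemma card_perm_imset : #|s @: S| = #|S|.
Proof. exact/card_imset/perm_inj. Qed.

Lemma perm_enum_val_in (i : 'I_#|S|) : s (Order.enum_val i) \in s @: S.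
Proof. exact/imset_f/Order.enum_valP. Qed.

Definition restrict_col (j : 'I_#|S|) : 'I_n :=
  Order.enum_val (cast_ord (esym card_perm_imset) j).

Definition restrict_fun (i : 'I_#|S|) : 'I_#|S| :=
  cast_ord card_perm_imset
    (Order.enum_rank_in (perm_enum_val_in i) (s (Order.enum_val i))).

Lemma restrict_fun_eq i j :
  (restrict_fun i == j) = (s (Order.enum_val i) == restrict_col j).
Proof.
rewrite /restrict_col -[j in LHS](cast_ordKV card_perm_imset).
set j' := cast_ord _ j; rewrite (inj_eq (@cast_ord_inj _ _ _)).
apply/eqP/eqP => [<-|e]; first by rewrite Order.enum_rankK_in ?perm_enum_val_in.
by apply: Order.enum_val_inj; rewrite Order.enum_rankK_in ?perm_enum_val_in.
Qed.

Lemma restrict_fun_inj : injective restrict_fun.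
Proof.
move=> i j eq_ij; apply/Order.enum_val_inj/(@perm_inj _ s).
have /eqP -> : s (Order.enum_val i) == restrict_col (restrict_fun j).
  by rewrite -restrict_fun_eq eq_ij.
by apply/esym/eqP; rewrite -restrict_fun_eq.
Qed.

Definition restrict_perm : {perm 'I_#|S|} := perm restrict_fun_inj.

Lemma restrict_permE i j :
  (restrict_perm i == j) = (s (Order.enum_val i) == restrict_col j).
Proof. by rewrite permE restrict_fun_eq. Qed.

Lemma contains_restrict_perm : contains s (perm_pat restrict_perm).
Proof.
apply/containsP; exists [ffun i => Order.enum_val i], [ffun j => restrict_col j].
split; try by apply/incrP => i j; rewrite !ffunE lt_enum_val_ord.
by move=> i j; rewrite !ffunE mxE restrict_permE.
Qed.

Lemma restrict_perm_contains L (r : {ffun 'I_(pr L) -> 'I_n})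
    (c : {ffun 'I_(pc L) -> 'I_n}) :
  incr r -> incr c -> (forall i, r i \in S) -> (forall j, c j \in s @: S) ->
  (forall i j, pm L i j = (s (r i) == c j)) ->
  contains restrict_perm L.
Proof.
move=> r_incr c_incr rS cS occ.
have [r' r'_incr r'E] := incr_enum_factor rS r_incr.
have [c' c'_incr c'E] := incr_enum_factor cS c_incr.
apply/containsP; exists r', [ffun j => cast_ord card_perm_imset (c' j)]; split=> //.
  by apply/incrP => i j; rewrite !ffunE => /(incrP _ c'_incr).
by move=> i j; rewrite ffunE restrict_permE /restrict_col cast_ordK c'E r'E occ.
Qed.

End RestrictPerm.

Lemma contains_small_perm n (s : {perm 'I_n}) L : contains s L ->
  exists k (p : {perm 'I_k}),
    [/\ k <= pr L + pc L, contains s (perm_pat p) & contains p L].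
Proof.
move=> /containsP [r [c [r_incr c_incr occ]]].
pose S := [set r i | i : 'I_(pr L)] :|: [set (s^-1)%g (c j) | j : 'I_(pc L)].
exists #|S|, (restrict_perm s S); split.
- apply: (leq_trans (leq_card_setU _ _)).
  by apply: leq_add; rewrite (leq_trans (leq_imset_card _ _)) ?card_ord.
- exact: contains_restrict_perm.
apply: (restrict_perm_contains r_incr c_incr _ _ occ) => [i|j].
- by rewrite inE imset_f.
- by rewrite -[c j](permKV s) imset_f // inE orbC imset_f.
Qed.

Definition max_pattern_size (F : seq ppat) : nat := \max_(L <- F) (pr L + pc L).

Lemma has_contains_small_perm n (s : {perm 'I_n}) F : has (contains s) F ->
  exists k (p : {perm 'I_k}),
    [/\ k <= max_pattern_size F, contains s (perm_pat p) & has (contains p) F].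
Proof.
rewrite /max_pattern_size; elim: F => [|L F IH] //=; rewrite big_cons => /orP [sL|sF].
  have [k [p [le_k sp pL]]] := contains_small_perm sL.
  by exists k, p; rewrite pL leq_max le_k.
have [k [p [le_k sp pF]]] := IH sF.
by exists k, p; rewrite pF orbT leq_max le_k orbT.
Qed.

Definition perms_upto (N : nat) : seq {k : nat & {perm 'I_k}} :=
  [seq Tagged (fun k => {perm 'I_k}) p | k <- iota 0 N.+1, p <- enum {perm 'I_k}].

Lemma mem_perms_upto N k (p : {perm 'I_k}) :
  k <= N -> Tagged (fun k => {perm 'I_k}) p \in perms_upto N.
Proof.
move=> le_kN; apply/allpairsPdep; exists k, p; split=> //.
  by rewrite mem_iota ltnS le_kN.
by rewrite mem_enum.
Qed.

Lemma eq_Cn n F G :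
  (forall s : {perm 'I_n}, has (contains s) F = has (contains s) G) ->
  Cn n F = Cn n G.
Proof.
move=> eq_FG; apply: eq_card => s; rewrite !inE.
by rewrite !(eq_all (a2 := predC (contains s))) // !all_predC eq_FG.
Qed.

Theorem proposition3p1 (F1 : seq ppat) :
  all is_partial F1 ->
  exists F2 : seq {k : nat & {perm 'I_k}},
    forall n : nat, Cn n F1 = Cn n [seq perm_pat (projT2 x) | x <- F2].
Proof.
move=> _.
exists [seq x <- perms_upto (max_pattern_size F1) | has (contains (projT2 x)) F1].
move=> n; apply: eq_Cn => s; rewrite has_map; apply/idP/hasP.
- move=> /has_contains_small_perm [k [p [le_k sp pF]]].
  by exists (Tagged (fun k => {perm 'I_k}) p); rewrite // mem_filter pF mem_perms_upto.
- move=> [[k p]]; rewrite mem_filter => /andP [pF _] sp.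
  by apply: sub_has pF => L; apply: contains_trans.
Qed.
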